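(* Let $X$ be a compactum and define $l X: M_\cup X\to I^{C(X,I)}$ by $$lX(\nu)(\varphi)=\max\{\nu(\varphi^{-1}([s,1]))\cdot s: s\in(0,1]\},\qquad \nu\in M_\cup X,\ \varphi\in C(X,I).$$ Let $SX\subset I^{C(X,I)}$ be the set of all functionals $\upsilon: C(X,I)\to I$ such that (1) $\upsilon(1_X)=1$, where $1_X$ is the constant function $1$; (2) $\upsilon(\lambda\cdot\varphi)=\lambda\cdot\upsilon(\varphi)$ for all $\lambda\in I$ and $\varphi\in C(X,I)$; (3) $\upsilon(\max\{\psi,\varphi\})=\max\{\upsilon(\psi),\upsilon(\varphi)\}$ for all $\psi,\varphi\in C(X,I)$ (maximum taken pointwise on the left). Then $lX(M_\cup X)=SX$.
   Context: A compactum is a compact Hausdorff space; $I=[0,1]$; $C(X,I)$ is the set of continuous maps $X\to I$. An (upper-semicontinuous) capacity on a compactum $X$ is a function $\nu$ from the closed subsets of $X$ to $I$ such that: (1) $\nu(X)=1$, $\nu(\emptyset)=0$; (2) if $F\subset G$ then $\nu(F)\le\nu(G)$; (3) if $\nu(F)<a$ then there is an open set $O\supset F$ with $\nu(B)<a$ for every closed $B\subset O$. A capacity $\nu$ is a possibility capacity if $\nu(A\cup B)=\max\{\nu(A),\nu(B)\}$ for all closed $A,B\subset X$; $M_\cup X$ denotes the set of possibility capacities on $X$. (The maximum in the definition of $lX$ exists.) *)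

From Stdlib Require Import Reals List.
Open Scope R_scope.

Definition subset {X : Type} (A B : X -> Prop) : Prop := forall x, A x -> B x.
Definition fullset {X : Type} : X -> Prop := fun _ => True.
Definition emptyset {X : Type} : X -> Prop := fun _ => False.
Definition setU {X : Type} (A B : X -> Prop) : X -> Prop := fun x => A x \/ B x.

Definition is_topology {X : Type} (op : (X -> Prop) -> Prop) : Prop :=
  op fullset /\ op emptyset /\
  (forall U V, op U -> op V -> op (fun x => U x /\ V x)) /\
  (forall F : (X -> Prop) -> Prop, (forall U, F U -> op U) ->
     op (fun x => exists U, F U /\ U x)).

Definition is_closed {X : Type} (op : (X -> Prop) -> Prop) (A : X -> Prop) : Prop :=
  op (fun x => ~ A x).

Definition is_compact {X : Type} (op : (X -> Prop) -> Prop) : Prop :=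
  forall C : (X -> Prop) -> Prop,
    (forall U, C U -> op U) -> (forall x, exists U, C U /\ U x) ->
    exists l : list (X -> Prop),
      (forall U, In U l -> C U) /\ (forall x, exists U, In U l /\ U x).

Definition is_hausdorff {X : Type} (op : (X -> Prop) -> Prop) : Prop :=
  forall x y : X, x <> y -> exists U V, op U /\ op V /\ U x /\ V y /\
    (forall z, ~ (U z /\ V z)).

Definition compactum {X : Type} (op : (X -> Prop) -> Prop) : Prop :=
  is_topology op /\ is_compact op /\ is_hausdorff op.

Definition R_open (U : R -> Prop) : Prop :=
  forall x, U x -> exists eps, eps > 0 /\ forall y, Rabs (y - x) < eps -> U y.

Definition in_CXI {X : Type} (op : (X -> Prop) -> Prop) (phi : X -> R) : Prop :=
  (forall x, 0 <= phi x <= 1) /\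
  (forall U, R_open U -> op (fun x => U (phi x))).

(* Upper-semicontinuous capacity; nu is only relevant on closed sets. *)
Definition is_capacity {X : Type} (op : (X -> Prop) -> Prop)
    (nu : (X -> Prop) -> R) : Prop :=
  (forall F, is_closed op F -> 0 <= nu F <= 1) /\
  nu fullset = 1 /\ nu emptyset = 0 /\
  (forall F G, is_closed op F -> is_closed op G -> subset F G -> nu F <= nu G) /\
  (forall F a, is_closed op F -> nu F < a ->
     exists O, op O /\ subset F O /\
       forall B, is_closed op B -> subset B O -> nu B < a).

Definition is_possibility {X : Type} (op : (X -> Prop) -> Prop)
    (nu : (X -> Prop) -> R) : Prop :=
  is_capacity op nu /\
  forall A B, is_closed op A -> is_closed op B ->
    nu (setU A B) = Rmax (nu A) (nu B).

Definition lX_val {X : Type} (nu : (X -> Prop) -> R) (phi : X -> R) (r : R) : Prop :=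
  (exists s, 0 < s <= 1 /\ r = nu (fun x => s <= phi x <= 1) * s) /\
  (forall s, 0 < s <= 1 -> nu (fun x => s <= phi x <= 1) * s <= r).

Definition in_SX {X : Type} (op : (X -> Prop) -> Prop) (ups : (X -> R) -> R) : Prop :=
  (forall phi, in_CXI op phi -> 0 <= ups phi <= 1) /\
  ups (fun _ => 1) = 1 /\
  (forall lam phi, 0 <= lam <= 1 -> in_CXI op phi ->
     ups (fun x => lam * phi x) = lam * ups phi) /\
  (forall psi phi, in_CXI op psi -> in_CXI op phi ->
     ups (fun x => Rmax (psi x) (phi x)) = Rmax (ups psi) (ups phi)).

From Stdlib Require Import Reals List Lra Lia.
From Stdlib Require Import FunctionalExtensionality PropExtensionality ClassicalEpsilon Classical.
Open Scope R_scope.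

(* For a capacity nu and phi in C(X,I), write m(s) = nu(phi^{-1}([s,1])).  The
   map m is nonincreasing, and compactness of X together with the upper
   semicontinuity of nu makes it upper semicontinuous from the left; for such
   m the supremum of m(s) * s over (0,1] is attained (level_product_max).

   Inclusion lX(M_cup X) <= SX: the value lX(nu)(phi) exists by the above, and
   the three axioms of SX follow from how level sets transform under constants,
   scaling (level_scale) and maxima (level_max, where maxitivity of nu is used).

   Inclusion SX <= lX(M_cup X): given ups in SX, put
     nu(F) = inf { ups g : g in C(X,I), g >= 1 on F }   (capacity_of).
   Maxitivity and homogeneity of ups make nu a possibility capacity.  The bound
   nu(phi^{-1}([s,1])) * s <= ups phi comes from testing nu on min(1, phi/s);
   conversely, covering the geometric bands r^(n+1) <= phi <= r^n by nearly
   optimal test functions shows that these products approach ups phi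
   (band_cover), and the supremum is again attained. *)

Lemma pred_ext {X : Type} (A B : X -> Prop) : (forall x, A x <-> B x) -> A = B.
Proof.
  intros H; apply functional_extensionality; intros x.
  apply propositional_extensionality; auto.
Qed.

Lemma Rle_eps (x y : R) : (forall e, e > 0 -> x <= y + e) -> x <= y.
Proof. intros h. destruct (Rle_dec x y); auto. specialize (h ((x - y) / 2)). lra. Qed.

Lemma lub_approx (E : R -> Prop) (c : R) :
  is_lub E c -> forall e, e > 0 -> exists y, E y /\ c - e < y.
Proof.
  intros [_ hlub] e he. apply NNPP; intros hn.
  assert (c <= c - e); [|lra].
  apply hlub. intros y hy. destruct (Rle_dec y (c - e)) as [|h]; auto.
  exfalso; apply hn. exists y; split; [exact hy | lra].
Qed.

Lemma ball_open (a d : R) : R_open (fun y => Rabs (y - a) < d).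
Proof.
  intros y hy. exists (d - Rabs (y - a)). split; [lra|].
  intros z hz. replace (z - a) with ((z - y) + (y - a)) by ring.
  pose proof (Rabs_triang (z - y) (y - a)). lra.
Qed.

Lemma lt_open (t : R) : R_open (fun y => y < t).
Proof. intros y hy. exists (t - y); split; [lra|]. intros z hz. apply Rabs_def2 in hz. lra. Qed.

Lemma gt_open (t : R) : R_open (fun y => t < y).
Proof. intros y hy. exists (y - t); split; [lra|]. intros z hz. apply Rabs_def2 in hz. lra. Qed.

Lemma Rmax_lip (a b a0 b0 e : R) : Rabs (a - a0) < e -> Rabs (b - b0) < e ->
  Rabs (Rmax a b - Rmax a0 b0) < e.
Proof.
  intros h1 h2. apply Rabs_def2 in h1. apply Rabs_def2 in h2.
  unfold Rmax; destruct (Rle_dec a b); destruct (Rle_dec a0 b0); apply Rabs_def1; lra.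
Qed.

Lemma Rmin1_lip (a b : R) : Rabs (Rmin 1 a - Rmin 1 b) <= Rabs (a - b).
Proof.
  unfold Rmin; destruct (Rle_dec 1 a); destruct (Rle_dec 1 b);
  unfold Rabs; repeat destruct Rcase_abs; lra.
Qed.

Definition is_continuous {X : Type} (op : (X -> Prop) -> Prop) (f : X -> R) : Prop :=
  forall U, R_open U -> op (fun x => U (f x)).

Definition level {X : Type} (phi : X -> R) (s : R) : X -> Prop :=
  fun x => s <= phi x <= 1.

Section ContinuousMaps.

Context {X : Type} (op : (X -> Prop) -> Prop).
Hypothesis hT : is_topology op.

Lemma open_local (A : X -> Prop) :
  (forall x, A x -> exists V, op V /\ V x /\ subset V A) -> op A.
Proof.
  intros H. destruct hT as [_ [_ [_ hU]]].
  replace A with (fun x => exists U, (op U /\ subset U A) /\ U x).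
  - apply hU. intros U [oU _]; exact oU.
  - apply pred_ext; intros x; split.
    + intros [U [[_ sU] Ux]]. apply sU; auto.
    + intros Ax. destruct (H x Ax) as [V [oV [Vx sV]]]. exists V; auto.
Qed.

Lemma continuous_controlled (a b m : X -> R) :
  is_continuous op a -> is_continuous op b ->
  (forall x0 eps, eps > 0 -> exists d, d > 0 /\ forall x,
      Rabs (a x - a x0) < d -> Rabs (b x - b x0) < d -> Rabs (m x - m x0) < eps) ->
  is_continuous op m.
Proof.
  intros ha hb hm U hU. apply open_local.
  intros x0 Ux0. destruct (hU _ Ux0) as [eps [he hball]].
  destruct (hm x0 eps he) as [d [hd hmd]].
  exists (fun x => Rabs (a x - a x0) < d /\ Rabs (b x - b x0) < d).
  split; [| split].
  - destruct hT as [_ [_ [hI _]]]. apply hI.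
    + apply (ha (fun y => Rabs (y - a x0) < d)); apply ball_open.
    + apply (hb (fun y => Rabs (y - b x0) < d)); apply ball_open.
  - rewrite !Rminus_diag, Rabs_R0. lra.
  - intros x [h1 h2]. apply hball. apply hmd; auto.
Qed.

Lemma const_C (c : R) : 0 <= c <= 1 -> in_CXI op (fun _ => c).
Proof.
  intros hc. split; [intros; exact hc|]. intros U _.
  destruct hT as [hF [hE _]].
  destruct (classic (U c)) as [h|h].
  - replace (fun _ : X => U c) with (@fullset X); auto.
    apply pred_ext; intros; unfold fullset; tauto.
  - replace (fun _ : X => U c) with (@emptyset X); auto.
    apply pred_ext; intros; unfold emptyset; tauto.
Qed.

Lemma lipschitz_comp_C (phi : X -> R) (g : R -> R) (L : R) :
  in_CXI op phi -> (forall y, 0 <= y <= 1 -> 0 <= g y <= 1) -> L > 0 ->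
  (forall y z, Rabs (g z - g y) <= L * Rabs (z - y)) -> in_CXI op (fun x => g (phi x)).
Proof.
  intros [hr hc] hg hL hl. split; [intros; apply hg; apply hr|].
  apply (continuous_controlled phi phi); auto.
  intros x0 eps he. exists (eps / L). split.
  - apply Rdiv_lt_0_compat; lra.
  - intros x h1 _. eapply Rle_lt_trans; [apply hl|].
    apply Rmult_lt_reg_r with (/ L); [apply Rinv_0_lt_compat; lra|].
    replace (L * Rabs (phi x - phi x0) * / L) with (Rabs (phi x - phi x0)) by (field; lra).
    exact h1.
Qed.

Lemma max_C (psi phi : X -> R) :
  in_CXI op psi -> in_CXI op phi -> in_CXI op (fun x => Rmax (psi x) (phi x)).
Proof.
  intros [r1 c1] [r2 c2]. split.
  - intros x. specialize (r1 x); specialize (r2 x). unfold Rmax; destruct Rle_dec; lra.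
  - apply (continuous_controlled psi phi); auto. intros x0 eps he. exists eps; split; auto.
    intros x h1 h2. apply Rmax_lip; auto.
Qed.

Lemma scale_C (lam : R) (phi : X -> R) :
  0 <= lam <= 1 -> in_CXI op phi -> in_CXI op (fun x => lam * phi x).
Proof.
  intros hl hp. apply (lipschitz_comp_C phi (fun y => lam * y) (lam + 1)); auto; try lra.
  - intros y hy. split; [apply Rmult_le_pos; lra|]. nra.
  - intros y z. replace (lam * z - lam * y) with (lam * (z - y)) by ring.
    rewrite Rabs_mult, (Rabs_right lam) by lra.
    pose proof (Rabs_pos (z - y)). nra.
Qed.

Lemma clip_C (r : R) (phi : X -> R) :
  0 < r -> in_CXI op phi -> in_CXI op (fun x => Rmin 1 (phi x / r)).
Proof.
  intros hr hp. apply (lipschitz_comp_C phi (fun y => Rmin 1 (y / r)) (/ r)); auto.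
  - intros y hy. unfold Rmin; destruct Rle_dec; [lra|]. split; [|lra].
    apply Rmult_le_pos; [lra| left; apply Rinv_0_lt_compat; lra].
  - apply Rinv_0_lt_compat; lra.
  - intros y z. eapply Rle_trans; [apply Rmin1_lip|].
    unfold Rdiv. replace (z * / r - y * / r) with (/ r * (z - y)) by ring.
    rewrite Rabs_mult, (Rabs_right (/ r)); [lra|]. left; apply Rinv_0_lt_compat; lra.
Qed.

Lemma level_closed (phi : X -> R) (s : R) : in_CXI op phi -> is_closed op (level phi s).
Proof.
  intros [_ hc]. unfold is_closed, level. apply (hc (fun y => ~ (s <= y <= 1))).
  intros y hy. destruct (Rlt_dec y s).
  - exists (s - y); split; [lra|]. intros z hz. apply Rabs_def2 in hz. lra.
  - exists (y - 1); split; [lra|]. intros z hz. apply Rabs_def2 in hz. lra.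
Qed.

End ContinuousMaps.

(* Compactness: an open neighbourhood of the level set at s0 already contains
   a level set at some lower level t < s0.  This is where compactness of X is used. *)
Lemma level_nbhd {X : Type} (op : (X -> Prop) -> Prop) (hK : is_compact op)
  (phi : X -> R) (s0 : R) (O : X -> Prop) :
  in_CXI op phi -> 0 < s0 <= 1 -> op O -> subset (level phi s0) O ->
  exists t, 0 < t < s0 /\ subset (level phi t) O.
Proof.
  intros hp hs hO hF.
  set (C := fun U : X -> Prop => U = O \/ exists t, 0 < t < s0 /\ U = (fun x => phi x < t)).
  destruct (hK C) as [l [hl hcov]].
  - intros U [->|[t [_ ->]]]; auto. apply (proj2 hp (fun y => y < t)). apply lt_open.
  - intros x. destruct (classic (O x)) as [h|h].
    + exists O; split; [left; reflexivity | exact h].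
    + assert (phi x < s0).
      { destruct (Rlt_dec (phi x) s0); auto. exfalso; apply h, hF.
        unfold level. pose proof (proj1 hp x). lra. }
      exists (fun y => phi y < (Rmax (phi x) 0 + s0) / 2). split.
      * right. exists ((Rmax (phi x) 0 + s0) / 2). split; auto.
        unfold Rmax; destruct Rle_dec; lra.
      * unfold Rmax; destruct Rle_dec; lra.
  -
    assert (Hfin : forall l, (forall U, In U l -> C U) -> exists t, 0 < t < s0 /\
       forall U, In U l -> forall x, U x -> O x \/ phi x < t).
    { induction l0 as [|U l0 IH]; intros hl0.
      - exists (s0 / 2). split; [lra|]. intros U [].
      - destruct IH as [t [ht hU]]. { intros; apply hl0; right; auto. }
        destruct (hl0 U (or_introl eq_refl)) as [->|[t' [ht' ->]]].
        + exists t; split; auto.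
          intros U' [<-|hin] x hx; [left; exact hx | exact (hU U' hin x hx)].
        + exists (Rmax t t'). split. { unfold Rmax; destruct Rle_dec; lra. }
          intros U' [<-|hin] x hx.
          * right. unfold Rmax; destruct Rle_dec; lra.
          * destruct (hU U' hin x hx); auto. right. unfold Rmax; destruct Rle_dec; lra. }
    destruct (Hfin l hl) as [t [ht hU]]. exists t; split; auto.
    intros x hx. destruct (hcov x) as [U [hin hUx]].
    destruct (hU U hin x hUx); auto. unfold level in hx. lra.
Qed.


Lemma usc_sup_attained (f : R -> R) (c : R) :
  (forall s, 0 < s <= 1 -> 0 <= f s <= s) ->
  (forall s, 0 < s <= 1 -> f s <= c) ->
  (forall e, e > 0 -> exists s, 0 < s <= 1 /\ c - e < f s) ->
  (forall s0 d, 0 < s0 <= 1 -> d > 0 -> exists t0, 0 < t0 < s0 /\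
      forall u, t0 <= u <= s0 + d -> u <= 1 -> f u <= f s0 + d) ->
  exists s, 0 < s <= 1 /\ c = f s.
Proof.
  intros hbound hub happrox husc.
  pose proof (hbound 1 ltac:(lra)) as hf1. pose proof (hub 1 ltac:(lra)) as hc1.
  destruct (Req_dec c 0) as [c0|cnz].
  { exists 1. split; lra. }
  assert (cpos : 0 < c) by lra.
  assert (cle1 : c <= 1).
  { destruct (Rle_dec c 1) as [|hc]; auto.
    destruct (happrox (c - 1)) as [s [hs hfs]]; [lra|].
    pose proof (hbound s hs). lra. }
  (* E s: the supremum of f over [s,1] is still c *)
  set (E := fun s => 0 < s <= 1 /\
    forall e, e > 0 -> exists u, s <= u <= 1 /\ c - e < f u).
  assert (Ehalf : E (c / 2)).
  { split; [lra|]. intros e he. destruct (happrox (Rmin e (c / 2))) as [u [hu hfu]].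
    { unfold Rmin; destruct Rle_dec; lra. }
    exists u. pose proof (hbound u hu).
    unfold Rmin in hfu; destruct Rle_dec in hfu; (split; [split|]; lra). }
  destruct (completeness E) as [ss [hsub hsup]].
  { exists 1. intros s [hs _]. lra. }
  { exists (c / 2); auto. }
  assert (hss : c / 2 <= ss <= 1).
  { split; [apply hsub; auto | apply hsup; intros s [hs _]; lra]. }
  exists ss. split; [lra|].
  apply NNPP; intros hne.
  assert (hlt : f ss < c) by (pose proof (hub ss ltac:(lra)); lra).
  set (d := (c - f ss) / 2).
  destruct (husc ss d ltac:(lra) ltac:(unfold d; lra)) as [t0 [ht0 hnear]].
  assert (hs : exists s, E s /\ t0 < s).
  { apply NNPP. intros hn. assert (ss <= t0); [|lra].
    apply hsup. intros s hs. destruct (Rle_dec s t0) as [|hn2]; auto.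
    exfalso; apply hn. exists s; split; auto; lra. }
  destruct hs as [s [[_ hE] hst]].
  (* near-maximal values of f beyond s lie beyond ss + d, so E (ss + d) *)
  assert (hfar : forall e, e > 0 -> exists u, ss + d <= u <= 1 /\ c - e < f u).
  { intros e he. destruct (hE (Rmin e d)) as [u [hu hfu]].
    { unfold Rmin, d; destruct Rle_dec; lra. }
    exists u. assert (c - d <= c - Rmin e d) by (unfold Rmin; destruct Rle_dec; lra).
    split; [split|]; try lra.
    - destruct (Rle_dec u (ss + d)) as [hu'|hu']; [|lra].
      pose proof (hnear u ltac:(lra) ltac:(lra)). unfold d in *. lra.
    - unfold Rmin in hfu; destruct Rle_dec in hfu; lra. }
  assert (Ebeyond : E (ss + d)).
  { destruct (hfar d ltac:(unfold d; lra)) as [u [hu _]].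
    split; [unfold d in *; lra | exact hfar]. }
  pose proof (hsub _ Ebeyond). unfold d in *. lra.
Qed.

Lemma level_product_max (m : R -> R) (c : R) :
  (forall s, 0 < s <= 1 -> 0 <= m s <= 1) ->
  (forall s t, 0 < s <= t -> t <= 1 -> m t <= m s) ->
  (forall s0 d, 0 < s0 <= 1 -> d > 0 -> exists t, 0 < t < s0 /\ m t < m s0 + d) ->
  (forall s, 0 < s <= 1 -> m s * s <= c) ->
  (forall e, e > 0 -> exists s, 0 < s <= 1 /\ c - e < m s * s) ->
  exists s, 0 < s <= 1 /\ c = m s * s.
Proof.
  intros hm hmono hleft hub happrox.
  apply (usc_sup_attained (fun s => m s * s)); auto.
  - intros s hs. pose proof (hm s hs). split; nra.
  - intros s0 d hs0 hd. destruct (hleft s0 d hs0 hd) as [t [ht hmt]].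
    exists t. split; auto. intros u hu hu1.
    pose proof (hm s0 hs0). pose proof (hm u ltac:(lra)).
    destruct (Rle_dec u s0).
    + assert (m u <= m t) by (apply hmono; lra). nra.
    + assert (m u <= m s0) by (apply hmono; lra). nra.
Qed.


Lemma lX_val_unique {X : Type} (nu : (X -> Prop) -> R) (phi : X -> R) (r1 r2 : R) :
  lX_val nu phi r1 -> lX_val nu phi r2 -> r1 = r2.
Proof.
  intros [[s1 [hs1 e1]] b1] [[s2 [hs2 e2]] b2].
  pose proof (b1 s2 hs2). pose proof (b2 s1 hs1). lra.
Qed.

Lemma level_above_one {X : Type} (phi : X -> R) (s : R) : 1 < s -> level phi s = emptyset.
Proof. intros hs. apply pred_ext; intros x; unfold level, emptyset; split; [lra | tauto]. Qed.

Lemma level_scale {X : Type} (phi : X -> R) (lam s : R) :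
  0 < lam <= 1 -> (forall x, 0 <= phi x <= 1) ->
  level (fun x => lam * phi x) s = level phi (s / lam).
Proof.
  intros hl hr. apply pred_ext; intros x. unfold level. pose proof (hr x).
  assert (E : s <= lam * phi x <-> s / lam <= phi x).
  { split; intros h.
    - apply Rmult_le_reg_l with lam; [lra|].
      replace (lam * (s / lam)) with s by (field; lra). exact h.
    - replace s with (lam * (s / lam)) by (field; lra). apply Rmult_le_compat_l; lra. }
  rewrite E. split; intros [h1 h2]; split; auto; nra.
Qed.

Lemma level_max {X : Type} (psi phi : X -> R) (s : R) :
  (forall x, 0 <= psi x <= 1) -> (forall x, 0 <= phi x <= 1) ->
  level (fun x => Rmax (psi x) (phi x)) s = setU (level psi s) (level phi s).
Proof.
  intros h1 h2. apply pred_ext; intros x. unfold setU, level.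
  pose proof (h1 x). pose proof (h2 x).
  unfold Rmax; destruct Rle_dec; split; intros; try lra;
  destruct (Rle_dec s (psi x)); destruct (Rle_dec s (phi x)); try lra; intuition lra.
Qed.

Section FromCapacities.

Context {X : Type} (op : (X -> Prop) -> Prop).
Hypothesis hK : is_compact op.

Lemma lX_val_exists (nu : (X -> Prop) -> R) (phi : X -> R) :
  is_capacity op nu -> in_CXI op phi -> exists r, lX_val nu phi r.
Proof.
  intros [hb [_ [_ [hmono husc]]]] hp.
  set (m := fun s => nu (level phi s)).
  assert (hm : forall s, 0 <= m s <= 1) by (intros s; apply hb, level_closed; auto).
  destruct (completeness (fun y => exists s, 0 < s <= 1 /\ y = m s * s)) as [c hc].
  { exists 1. intros y [s [hs ->]]. pose proof (hm s). nra. }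
  { exists (m 1 * 1). exists 1. split; auto; lra. }
  assert (hub : forall s, 0 < s <= 1 -> m s * s <= c).
  { intros s hs. apply (proj1 hc). exists s; auto. }
  exists c. split; [|exact hub].
  apply (level_product_max m c); auto.
  - intros s t hst ht. apply hmono; try apply level_closed; auto.
    intros x hx. unfold level in *. lra.
  - intros s0 d hs0 hd.
    destruct (husc _ (m s0 + d) (level_closed op phi s0 hp)) as [O [hO [hFO hB]]].
    { unfold m; lra. }
    destruct (level_nbhd op hK phi s0 O hp hs0 hO hFO) as [t [ht hFt]].
    exists t. split; auto. apply hB; auto. apply level_closed; auto.
  - intros e he. destruct (lub_approx _ c hc e he) as [y [[s [hs ->]] hy]].
    exists s; auto.
Qed.

Lemma lX_val_one (nu : (X -> Prop) -> R) :
  is_capacity op nu -> lX_val nu (fun _ => 1) 1.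
Proof.
  intros [_ [h1 _]].
  assert (E : forall s, 0 < s <= 1 -> level (fun _ : X => 1) s = fullset).
  { intros s hs. apply pred_ext; intros; unfold level, fullset; split; auto; lra. }
  split.
  - exists 1. split; [lra|]. unfold level in E. rewrite E by lra. rewrite h1; ring.
  - intros s hs. unfold level in E. rewrite E by auto. rewrite h1; lra.
Qed.

Lemma lX_val_scale (nu : (X -> Prop) -> R) (phi : X -> R) (c lam : R) :
  is_capacity op nu -> in_CXI op phi -> 0 <= lam <= 1 ->
  lX_val nu phi c -> lX_val nu (fun x => lam * phi x) (lam * c).
Proof.
  intros [hb [_ [h0 _]]] hp hl [[s0 [hs0 e0]] hb0].
  assert (hnu : forall s, 0 <= nu (level phi s) <= 1) by (intros; apply hb, level_closed; auto).
  unfold level in hnu.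
  assert (c0 : 0 <= c) by (rewrite e0; pose proof (hnu s0); nra).
  destruct (Req_dec lam 0) as [->|hl0].
  { assert (E : forall s, 0 < s -> level (fun x => 0 * phi x) s = emptyset).
    { intros s hs. apply pred_ext; intros x; unfold level, emptyset; split; [lra | tauto]. }
    split.
    - exists 1. split; [lra|]. unfold level in E. rewrite E, h0 by lra. ring.
    - intros s hs. unfold level in E. rewrite E, h0 by lra. lra. }
  assert (E := level_scale phi lam). unfold level in E.
  split.
  - exists (lam * s0). split; [nra|].
    rewrite E by (auto; lra || apply (proj1 hp)).
    replace (lam * s0 / lam) with s0 by (field; lra). rewrite e0; ring.
  - intros s hs. rewrite E by (auto; lra || apply (proj1 hp)).
    destruct (Rle_dec (s / lam) 1) as [hsl|hsl].
    + assert (hsl0 : 0 < s / lam <= 1) by (split; auto; apply Rdiv_lt_0_compat; lra).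
      pose proof (hb0 _ hsl0).
      replace (nu (fun x => s / lam <= phi x <= 1) * s) with
        (lam * (nu (fun x => s / lam <= phi x <= 1) * (s / lam))) by (field; lra).
      apply Rmult_le_compat_l; lra.
    + pose proof (level_above_one phi (s / lam)) as Ee. unfold level in Ee.
      rewrite Ee, h0 by lra. nra.
Qed.

Lemma lX_val_max (nu : (X -> Prop) -> R) (psi phi : X -> R) (a b : R) :
  is_possibility op nu -> in_CXI op psi -> in_CXI op phi ->
  lX_val nu psi a -> lX_val nu phi b ->
  lX_val nu (fun x => Rmax (psi x) (phi x)) (Rmax a b).
Proof.
  intros [[hb _] hU] hps hph [[s1 [hs1 e1]] hb1] [[s2 [hs2 e2]] hb2].
  assert (E : forall s, nu (level (fun x => Rmax (psi x) (phi x)) s) =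
     Rmax (nu (level psi s)) (nu (level phi s))).
  { intros s. rewrite level_max by (apply (proj1 hps) || apply (proj1 hph)).
    apply hU; apply level_closed; auto. }
  unfold level in E.
  assert (hnu : forall f s, in_CXI op f -> 0 <= nu (level f s) <= 1)
    by (intros; apply hb, level_closed; auto).
  unfold level in hnu.
  split.
  - destruct (Rle_dec b a).
    + exists s1. split; auto. rewrite E, Rmax_left by lra.
      pose proof (hb2 s1 hs1). pose proof (hnu psi s1 hps). pose proof (hnu phi s1 hph).
      unfold Rmax at 1; destruct Rle_dec; nra.
    + exists s2. split; auto. rewrite E, Rmax_right by lra.
      pose proof (hb1 s2 hs2). pose proof (hnu psi s2 hps). pose proof (hnu phi s2 hph).
      unfold Rmax at 1; destruct Rle_dec; nra.
  - intros s hs. rewrite E. pose proof (hb1 s hs). pose proof (hb2 s hs).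
    unfold Rmax; repeat destruct Rle_dec; nra.
Qed.

End FromCapacities.

Definition lX {X : Type} (nu : (X -> Prop) -> R) (phi : X -> R) : R :=
  epsilon (inhabits 0) (fun r => lX_val nu phi r).

Lemma lX_spec {X : Type} (op : (X -> Prop) -> Prop) (hK : is_compact op)
  (nu : (X -> Prop) -> R) (phi : X -> R) :
  is_capacity op nu -> in_CXI op phi -> lX_val nu phi (lX nu phi).
Proof. intros hn hp. unfold lX. apply epsilon_spec. apply (lX_val_exists op hK); auto. Qed.

Lemma lX_in_SX {X : Type} (op : (X -> Prop) -> Prop) (hX : compactum op)
  (nu : (X -> Prop) -> R) :
  is_possibility op nu -> in_SX op (lX nu).
Proof.
  intros hn. pose proof (proj1 hn) as hc. destruct hX as [hT [hK _]].
  assert (hspec : forall phi, in_CXI op phi -> lX_val nu phi (lX nu phi))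
    by (intros; apply (lX_spec op hK); auto).
  split; [|split; [|split]].
  - intros phi hp. destruct (hspec phi hp) as [[s [hs ->]] _].
    pose proof (proj1 hc _ (level_closed op phi s hp)) as hnu. unfold level in hnu. nra.
  - apply (lX_val_unique nu (fun _ => 1)); [apply hspec, const_C; auto; lra|].
    apply (lX_val_one op); auto.
  - intros lam phi hl hp. apply (lX_val_unique nu (fun x => lam * phi x)).
    + apply hspec, scale_C; auto.
    + apply (lX_val_scale op); auto.
  - intros psi phi hps hph. apply (lX_val_unique nu (fun x => Rmax (psi x) (phi x))).
    + apply hspec, max_C; auto.
    + apply (lX_val_max op); auto.
Qed.


Definition is_inf (E : R -> Prop) (r : R) : Prop :=
  (forall y, E y -> r <= y) /\ (forall b, (forall y, E y -> b <= y) -> b <= r).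

Definition dominating_value {X : Type} (op : (X -> Prop) -> Prop) (ups : (X -> R) -> R)
  (F : X -> Prop) (y : R) : Prop :=
  exists g, in_CXI op g /\ (forall x, F x -> 1 <= g x) /\ y = ups g.

Definition capacity_of {X : Type} (op : (X -> Prop) -> Prop) (ups : (X -> R) -> R)
  (F : X -> Prop) : R :=
  epsilon (inhabits 0) (fun r => is_inf (dominating_value op ups F) r).

Section FromFunctionals.

Context {X : Type} (op : (X -> Prop) -> Prop).
Hypothesis hT : is_topology op.
Variable ups : (X -> R) -> R.
Hypothesis hS : in_SX op ups.

(* Maxitivity makes every element of SX monotone. *)
Lemma ups_mono (f g : X -> R) :
  in_CXI op f -> in_CXI op g -> (forall x, f x <= g x) -> ups f <= ups g.
Proof.
  intros hf hg hle. destruct hS as [_ [_ [_ hM]]].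
  replace g with (fun x => Rmax (f x) (g x)) at 1.
  - rewrite hM by auto. apply Rmax_l.
  - apply functional_extensionality; intros x; apply Rmax_right; auto.
Qed.

(* Homogeneity and ups 1 = 1 make ups the identity on constants. *)
Lemma ups_const (d : R) : 0 <= d <= 1 -> ups (fun _ => d) = d.
Proof.
  intros hd. destruct hS as [_ [h1 [hH _]]].
  pose proof (hH d (fun _ => 1) hd (const_C op hT 1 ltac:(lra))) as h.
  rewrite h1 in h. replace (fun _ : X => d) with (fun _ : X => d * 1).
  - rewrite h; ring.
  - apply functional_extensionality; intros; ring.
Qed.

Let nu := capacity_of op ups.

(* The infimum defining nu exists: the set is nonempty (g = 1) and bounded below by 0. *)
Lemma capacity_of_spec (F : X -> Prop) : is_inf (dominating_value op ups F) (nu F).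
Proof.
  unfold nu, capacity_of. apply epsilon_spec.
  destruct (completeness (fun z => dominating_value op ups F (- z))) as [m [hub hlub]].
  - exists 0. intros z [g [hg [_ e]]]. pose proof (proj1 hS g hg). lra.
  - exists (-1). exists (fun _ => 1). split; [apply const_C; auto; lra|].
    split; [intros; lra|]. rewrite (proj1 (proj2 hS)). ring.
  - exists (- m). split.
    + intros y hy. assert (- y <= m); [|lra]. apply hub. rewrite Ropp_involutive. auto.
    + intros b hb. assert (m <= - b); [|lra]. apply hlub. intros z hz. pose proof (hb _ hz). lra.
Qed.

Lemma capacity_of_le (F : X -> Prop) (g : X -> R) :
  in_CXI op g -> (forall x, F x -> 1 <= g x) -> nu F <= ups g.
Proof. intros hg hF. apply (proj1 (capacity_of_spec F)). exists g; auto. Qed.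

Lemma capacity_of_approx (F : X -> Prop) (e : R) :
  e > 0 -> exists g, in_CXI op g /\ (forall x, F x -> 1 <= g x) /\ ups g < nu F + e.
Proof.
  intros he. apply NNPP; intros hn.
  assert (nu F + e <= nu F); [|lra].
  apply (proj2 (capacity_of_spec F)). intros y [g [hg [hF ->]]].
  destruct (Rle_dec (nu F + e) (ups g)) as [|hlt]; auto.
  exfalso; apply hn. exists g. split; [exact hg | split; [exact hF | apply Rnot_le_lt in hlt; lra]].
Qed.

Lemma capacity_of_bounds (F : X -> Prop) : 0 <= nu F <= 1.
Proof.
  split.
  - apply (proj2 (capacity_of_spec F)). intros y [g [hg [_ ->]]]. apply (proj1 hS g hg).
  - rewrite <- (proj1 (proj2 hS)). apply capacity_of_le; [apply const_C; auto; lra | intros; lra].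
Qed.

Lemma capacity_of_mono (F G : X -> Prop) : subset F G -> nu F <= nu G.
Proof.
  intros hFG. apply (proj2 (capacity_of_spec G)). intros y [g [hg [hG ->]]].
  apply capacity_of_le; auto.
Qed.

(* If g >= r on B then nu(B) * r <= ups g: apply the definition of nu to min(1, g/r). *)
Lemma capacity_of_scaled_le (B : X -> Prop) (g : X -> R) (r : R) :
  in_CXI op g -> 0 < r <= 1 -> (forall x, B x -> r <= g x) -> nu B * r <= ups g.
Proof.
  intros hg hr hB.
  set (psi := fun x => Rmin 1 (g x / r)).
  assert (hpsi : in_CXI op psi) by (apply clip_C; auto; lra).
  assert (h1 : nu B <= ups psi).
  { apply capacity_of_le; auto. intros x hx. specialize (hB x hx).
    unfold psi, Rmin. destruct Rle_dec as [|hn]; [lra|].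
    exfalso. apply hn. apply Rmult_le_reg_r with r; [lra|].
    unfold Rdiv. rewrite Rmult_assoc, Rinv_l by lra. lra. }
  assert (h2 : ups (fun x => r * psi x) <= ups g).
  { apply ups_mono; auto. apply scale_C; auto; lra.
    intros x. unfold psi, Rmin. destruct Rle_dec as [h|h].
    - assert (r <= g x); [|lra]. apply Rmult_le_reg_r with (/ r).
      + apply Rinv_0_lt_compat; lra.
      + rewrite Rinv_r by lra. exact h.
    - right. field. lra. }
  rewrite (proj1 (proj2 (proj2 hS)) r psi) in h2 by (auto; lra).
  nra.
Qed.

(* Upper semicontinuity: if nu(F) < a, the open set {g > r} around F, for g
   nearly optimal for F and r < 1 close to 1, has all its subsets of measure < a. *)
Lemma capacity_of_usc (F : X -> Prop) (a : R) :
  nu F < a -> exists O, op O /\ subset F O /\ forall B, subset B O -> nu B < a.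
Proof.
  intros ha. destruct (capacity_of_approx F (a - nu F)) as [g [hg [hF hu]]]; [lra|].
  pose proof (proj1 hS g hg) as hr. pose proof (capacity_of_bounds F).
  assert (apos : 0 < a) by lra.
  set (r := (ups g / a + 1) / 2).
  assert (hq : ups g / a < 1).
  { apply Rmult_lt_reg_r with a; auto. unfold Rdiv; rewrite Rmult_assoc, Rinv_l; lra. }
  assert (hq0 : 0 <= ups g / a).
  { apply Rmult_le_pos; [lra | left; apply Rinv_0_lt_compat; lra]. }
  assert (hra : ups g < r * a).
  { unfold r. replace ((ups g / a + 1) / 2 * a) with ((ups g + a) / 2) by (field; lra). lra. }
  exists (fun x => r < g x). split; [|split].
  - apply (proj2 hg (fun y => r < y)). apply gt_open.
  - intros x hx. specialize (hF x hx). unfold r; lra.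
  - intros B hB. assert (hr1 : 0 < r <= 1) by (unfold r; lra).
    pose proof (capacity_of_scaled_le B g r hg hr1 ltac:(intros x hx; left; apply hB; auto)).
    nra.
Qed.

Lemma capacity_of_possibility : is_possibility op nu.
Proof.
  split; [split; [|split; [|split; [|split]]]|].
  - intros; apply capacity_of_bounds.
  - apply Rle_antisym; [apply capacity_of_bounds|].
    apply (proj2 (capacity_of_spec fullset)). intros y [g [hg [hF ->]]].
    replace g with (fun _ : X => 1). { rewrite (proj1 (proj2 hS)); lra. }
    apply functional_extensionality; intros x. pose proof (proj1 hg x). specialize (hF x I). lra.
  - apply Rle_antisym; [|apply capacity_of_bounds].
    rewrite <- (ups_const 0) by lra. apply capacity_of_le; [apply const_C; auto; lra|].
    intros x [].
  - intros; apply capacity_of_mono; auto.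
  - intros F a _ ha. destruct (capacity_of_usc F a ha) as [O [hO [hFO hB]]].
    exists O; repeat split; auto.
  - intros A B _ _. apply Rle_antisym.
    + apply Rle_eps. intros e he.
      destruct (capacity_of_approx A e he) as [gA [hgA [hA uA]]].
      destruct (capacity_of_approx B e he) as [gB [hgB [hB uB]]].
      apply Rle_trans with (ups (fun x => Rmax (gA x) (gB x))).
      * apply capacity_of_le; [apply max_C; auto|]. intros x [hx|hx].
        -- specialize (hA x hx). eapply Rle_trans; [exact hA | apply Rmax_l].
        -- specialize (hB x hx). eapply Rle_trans; [exact hB | apply Rmax_r].
      * rewrite (proj2 (proj2 (proj2 hS))) by auto.
        unfold Rmax; repeat destruct Rle_dec; lra.
    + apply Rmax_lub; apply capacity_of_mono; intros x hx; unfold setU; auto.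
Qed.

Lemma level_dominator (phi : X -> R) (s delta : R) :
  0 < s <= 1 -> delta > 0 ->
  exists H, in_CXI op H /\ ups H < nu (level phi s) * s + delta /\
    forall x, level phi s x -> s <= H x.
Proof.
  intros hs hd.
  destruct (capacity_of_approx (level phi s) (delta / s)) as [g [hg [hF hu]]].
  { apply Rdiv_lt_0_compat; lra. }
  exists (fun x => s * g x). split; [apply scale_C; auto; lra|]. split.
  - rewrite (proj1 (proj2 (proj2 hS))) by (auto; lra).
    replace (nu (level phi s) * s + delta) with ((nu (level phi s) + delta / s) * s)
      by (field; lra).
    nra.
  - intros x hx. specialize (hF x hx). nra.
Qed.

Lemma pow_bounds (r : R) (n : nat) : 0 < r <= 1 -> 0 < r ^ n <= 1.
Proof. intros hr. induction n as [|n IH]; simpl; [lra|]. nra. Qed.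

(* If all the products nu(level phi s) * s are at most b, then the geometric
   bands r^(n+1) <= phi <= r^n, n <= N, are covered by a maximum of level
   dominators: r * phi is dominated on {phi >= r^(N+1)} by G with ups G <= b + delta. *)
Lemma band_cover (phi : X -> R) (b r delta : R) :
  in_CXI op phi -> 0 < r < 1 -> delta > 0 ->
  (forall s, 0 < s <= 1 -> nu (level phi s) * s <= b) ->
  forall N : nat, exists G, in_CXI op G /\ ups G <= b + delta /\
    forall x, r ^ S N <= phi x -> r * phi x <= G x.
Proof.
  intros hp hr hd hb.
  assert (hband : forall n : nat, exists H, in_CXI op H /\ ups H <= b + delta /\
     forall x, r ^ S n <= phi x <= r ^ n -> r * phi x <= H x).
  { intros n. pose proof (pow_bounds r (S n) ltac:(lra)) as hpn.
    destruct (level_dominator phi (r ^ S n) delta hpn hd) as [H [hH [hu hle]]].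
    exists H. split; auto. split; [pose proof (hb _ hpn); lra|].
    intros x [h1 h2]. pose proof (proj1 hp x).
    assert (r * phi x <= r ^ S n) by (simpl; apply Rmult_le_compat_l; lra).
    specialize (hle x ltac:(unfold level; lra)). lra. }
  induction N as [|N IH].
  - destruct (hband 0%nat) as [H [hH [hu hle]]]. exists H. split; auto. split; auto.
    intros x hx. apply hle. split; auto. simpl. apply (proj1 hp x).
  - destruct IH as [G [hG [huG hleG]]]. destruct (hband (S N)) as [H [hH [hu hle]]].
    exists (fun x => Rmax (G x) (H x)). split; [apply max_C; auto|]. split.
    + rewrite (proj2 (proj2 (proj2 hS))) by auto. unfold Rmax; destruct Rle_dec; lra.
    + intros x hx. destruct (Rle_dec (r ^ S N) (phi x)).
      * eapply Rle_trans; [apply hleG; auto | apply Rmax_l].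
      * eapply Rle_trans; [apply hle; split; auto; lra | apply Rmax_r].
Qed.

Lemma capacity_of_lX_approx (phi : X -> R) :
  in_CXI op phi -> forall e, e > 0 ->
  exists s, 0 < s <= 1 /\ ups phi - e < nu (level phi s) * s.
Proof.
  intros hp e he. set (c := ups phi).
  apply NNPP; intros hn.
  assert (hall : forall s, 0 < s <= 1 -> nu (level phi s) * s <= c - e).
  { intros s hs. destruct (Rle_dec (nu (level phi s) * s) (c - e)) as [|h]; auto.
    exfalso; apply hn; exists s; split; auto. lra. }
  assert (hc : 0 <= c <= 1) by (apply (proj1 hS); auto).
  assert (ce : e <= c).
  { pose proof (hall 1 ltac:(lra)). pose proof (capacity_of_bounds (level phi 1)). lra. }
  set (r := 1 - e / 4).
  assert (hr : 0 < r < 1) by (unfold r; lra).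
  destruct (pow_lt_1_zero r ltac:(rewrite Rabs_right; lra) (e / 4) ltac:(lra)) as [N hN].
  specialize (hN (S N) ltac:(lia)). rewrite Rabs_right in hN by (left; apply pow_bounds; lra).
  pose proof (pow_bounds r (S N) ltac:(lra)) as hpN.
  destruct (band_cover phi (c - e) r (e / 4) hp hr ltac:(lra) hall N) as [G [hG [huG hleG]]].
  (* r * phi <= max(G, r^(N+1)) pointwise, hence r * c <= max(c - 3e/4, e/4) *)
  assert (hK : ups (fun x => r * phi x) <= ups (fun x => Rmax (G x) ((fun _ => r ^ S N) x))).
  { apply ups_mono; [apply scale_C; auto; lra | apply max_C; auto; apply const_C; auto; lra|].
    intros x. destruct (Rle_dec (r ^ S N) (phi x)).
    - eapply Rle_trans; [apply hleG; auto | apply Rmax_l].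
    - eapply Rle_trans; [|apply Rmax_r]. pose proof (proj1 hp x). nra. }
  rewrite (proj2 (proj2 (proj2 hS))) in hK by (auto; apply const_C; auto; lra).
  rewrite (proj1 (proj2 (proj2 hS))) in hK by (auto; lra).
  rewrite ups_const in hK by lra. fold c in hK.
  assert (r * c >= c - e / 4) by (unfold r; nra).
  unfold Rmax in hK; destruct Rle_dec in hK; lra.
Qed.

Lemma capacity_of_lX (hK : is_compact op) (phi : X -> R) :
  in_CXI op phi -> lX_val nu phi (ups phi).
Proof.
  intros hp.
  assert (hub : forall s, 0 < s <= 1 -> nu (level phi s) * s <= ups phi).
  { intros s hs. apply capacity_of_scaled_le; auto. intros x [h _]; auto. }
  split; [|exact hub].
  apply (level_product_max (fun s => nu (level phi s))); auto.
  - intros; apply capacity_of_bounds.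
  - intros s t hst ht. apply capacity_of_mono. intros x hx. unfold level in *. lra.
  - intros s0 d hs0 hd.
    destruct (capacity_of_usc (level phi s0) (nu (level phi s0) + d)) as [O [hO [hFO hB]]];
      [lra|].
    destruct (level_nbhd op hK phi s0 O hp hs0 hO hFO) as [t [ht hFt]].
    exists t; split; auto.
  - apply capacity_of_lX_approx; auto.
Qed.

End FromFunctionals.

Theorem theorem3 (X : Type) (op : (X -> Prop) -> Prop) (hX : compactum op) :
  (forall nu, is_possibility op nu ->
     exists ups, in_SX op ups /\
       forall phi, in_CXI op phi -> lX_val nu phi (ups phi)) /\
  (forall ups, in_SX op ups ->
     exists nu, is_possibility op nu /\
       forall phi, in_CXI op phi -> lX_val nu phi (ups phi)).
Proof.
  pose proof hX as [hT [hK _]].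
  split.
  - intros nu hn. exists (lX nu). split.
    + apply (lX_in_SX op); auto.
    + intros phi hp. apply (lX_spec op hK); [apply hn | exact hp].
  - intros ups hS. exists (capacity_of op ups). split.
    + apply capacity_of_possibility; auto.
    + intros phi hp. apply capacity_of_lX; auto.
Qed.
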